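(* In any execution of $\mathcal{U}$, for every operation $o$, there is at most one execution of line 12 for $o$ that returns true. Equivalently: if line 12 is executed for $o$ and returns true at some time $T$, then every execution of line 12 for $o$ after time $T$ returns false.
   Context: Model: an asynchronous shared-memory system with possibly infinitely many processes, any of which may crash, communicating via atomic shared objects. A fetch-and-increment (F\&I) object stores an integer; F\&I$(C)$ atomically returns the current value and increments it. A generalized-compare-and-swap (GCAS) object $O$ stores a value and supports Read$(O)$ and GCAS$(c, O, v_1, v_2)$, which atomically does: if $c(\text{current value of } O, v_1)$ holds then set $O := v_2$ and return true, else return false. Tuples are compared componentwise for $=$; GCAS$(>, A, (t,-,-), v)$ succeeds iff the time field of $A$ is strictly greater than $t$. Implemented type $\mathcal{T} = (OP, RES, Q, \delta)$ with initial state $s_0$; a procedure $apply_{\mathcal{T}}(o,s)$ returns some $(s',r)$ with $(s,o,s',r)\in\delta$. $NULL$ is a value different from every response of $\mathcal{T}$, and $NOOP$ is a name different from every operation of $\mathcal{T}$. Algorithm $\mathcal{U}$: each process $p$ owns a GCAS object $H_p$ with fields $(time, response)$. Shared objects: F\&I object $C$, initially $1$; GCAS object $A$ with fields $(time, op, ptr)$, initially $(0, NOOP, h(NOOP))$, where $h(NOOP)$ is a pointer to an immutable location containing $(0,\perp)$; GCAS object $S$ with fields $(time, state, response, ptr)$, initially $(0, s_0, \perp, h(NOOP))$. Process $p$ performs operation $o$ by calling DoOp$(o)$: (1) DoOp$(o)$ invoked; (2) $t := $ F\&I$(C)$; (3) $H_p := (t, NULL)$; (4) while $H_p = (t, NULL)$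 do: (5) $(t^*, s^*, r^*, roptr^* ) := S$; (6) GCAS$(=, *roptr^*, (t^*, NULL), (t^*, r^* ))$; (7) GCAS$(>, A, (t,-,-), (t, o, \&H_p))$; (8) $(t', o', roptr') := A$; (9) $(\hat t, \hat r) := *roptr'$; (10) if $(\hat t,\hat r) = (t', NULL)$ then (11) $(s', r') := apply_{\mathcal{T}}(o', s^* )$; (12) GCAS$(=, S, (t^*,s^*,r^*,roptr^* ), (t', s', r', roptr'))$; (13) else GCAS$(=, A, (t', o', roptr'), (t, o, \&H_p))$; end while; (14) return $H_p.response$. Notation: an ''operation'' $o$ means one invocation of DoOp$(o)$ (or the initial $NOOP$). $p(o)$ is the process executing it; $t(o)$ is the value returned by its F\&I at line 2, or $\infty$ if line 2 has not been executed; $h(o)$ is $H_{p(o)}$. For $NOOP$: $t(NOOP)=0$ and $h(NOOP)$ is the immutable location containing $(0,\perp)$. ''Line 12 is executed for $o$'' means the new value written in that GCAS has the form $(t(o), -, r, h(o))$. *)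

(* Operational model of the universal construction U:
   an interleaving (atomic-step) semantics of the shared-memory algorithm. *)
From Stdlib Require Import Arith.
Set Implicit Arguments.

(* Processes are identified by natural numbers (possibly infinitely many). *)

(* Pointers to response locations: h(NOOP) (immutable) or &H_p. *)
Inductive ptr : Type := PNoop | PH (p : nat).

(* Values of a response field: NULL, the initial bottom, or a response of T. *)
Inductive rval (RES : Type) : Type := RNull | RBot | RVal (r : RES).
Arguments RNull {RES}. Arguments RBot {RES}.

Inductive opv (OP : Type) : Type := ONoop | OOp (o : OP).
Arguments ONoop {OP}.

Definition Aval (OP : Type) := (nat * opv OP * ptr)%type.            (* (time, op, ptr) *)
Definition Sval (Q RES : Type) := (nat * Q * rval RES * ptr)%type.   (* (time, state, response, ptr) *)
Definition Hval (RES : Type) := (nat * rval RES)%type.              (* (time, response) *)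

(* Local control state of a process: the next line to execute, with local variables.
   Idle = no pending DoOp (next step is an invocation, line 1). *)
Inductive loc (OP RES Q : Type) : Type :=
| Idle
| At2  (o : OP)
| At3  (o : OP) (t : nat)
| At4  (o : OP) (t : nat)
| At5  (o : OP) (t : nat)
| At6  (o : OP) (t : nat) (sv : Sval Q RES)
| At7  (o : OP) (t : nat) (sv : Sval Q RES)
| At8  (o : OP) (t : nat) (sv : Sval Q RES)
| At9  (o : OP) (t : nat) (sv : Sval Q RES) (av : Aval OP)
| At10 (o : OP) (t : nat) (sv : Sval Q RES) (av : Aval OP) (hv : Hval RES)
| At11 (o : OP) (t : nat) (sv : Sval Q RES) (av : Aval OP)
| At12 (o : OP) (t : nat) (sv : Sval Q RES) (av : Aval OP) (s' : Q) (r' : RES)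
| At13 (o : OP) (t : nat) (sv : Sval Q RES) (av : Aval OP)
| At14 (o : OP) (t : nat).
Arguments Idle {OP RES Q}.
Arguments At2 {OP RES Q}.
Arguments At3 {OP RES Q}.
Arguments At4 {OP RES Q}.
Arguments At5 {OP RES Q}.
Arguments At6 {OP RES Q}.
Arguments At7 {OP RES Q}.
Arguments At8 {OP RES Q}.
Arguments At9 {OP RES Q}.
Arguments At10 {OP RES Q}.
Arguments At11 {OP RES Q}.
Arguments At12 {OP RES Q}.
Arguments At13 {OP RES Q}.
Arguments At14 {OP RES Q}.

(* Global configuration: shared objects C, A, S, H_p, local states, and a ghost
   counter cK p = index of the current (or next) invocation of DoOp by p. *)
Record config (OP RES Q : Type) : Type := mkConfig {
  cC : nat;
  cA : Aval OP;
  cS : Sval Q RES;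
  cH : nat -> Hval RES;
  cL : nat -> loc OP RES Q;
  cK : nat -> nat }.

Definition upd {X : Type} (f : nat -> X) (p : nat) (v : X) : nat -> X :=
  fun q => if Nat.eqb q p then v else f q.

Definition setC OP RES Q (c : config OP RES Q) v :=
  mkConfig v (cA c) (cS c) (cH c) (cL c) (cK c).
Definition setA OP RES Q (c : config OP RES Q) v :=
  mkConfig (cC c) v (cS c) (cH c) (cL c) (cK c).
Definition setS OP RES Q (c : config OP RES Q) v :=
  mkConfig (cC c) (cA c) v (cH c) (cL c) (cK c).
Definition setH OP RES Q (c : config OP RES Q) p v :=
  mkConfig (cC c) (cA c) (cS c) (upd (cH c) p v) (cL c) (cK c).
Definition setL OP RES Q (c : config OP RES Q) p v :=
  mkConfig (cC c) (cA c) (cS c) (cH c) (upd (cL c) p v) (cK c).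
Definition setK OP RES Q (c : config OP RES Q) p v :=
  mkConfig (cC c) (cA c) (cS c) (cH c) (cL c) (upd (cK c) p v).

Definition deref OP RES Q (c : config OP RES Q) (x : ptr) : Hval RES :=
  match x with PNoop => (0, RBot) | PH q => cH c q end.

(* apply_T at line 11: any (s', r) with (s, o, s', r) in delta.  The NOOP case
   is unreachable at line 11; we allow any outcome there. *)
Definition apply_rel OP RES Q (delta : Q -> OP -> Q -> RES -> Prop)
  (ov : opv OP) (s : Q) (s' : Q) (r : RES) : Prop :=
  match ov with OOp o => delta s o s' r | ONoop => True end.

Inductive event (OP RES Q : Type) : Type :=
| EInvoke (p : nat) (o : OP)                         (* line 1 *)
| EFAI (p : nat) (k : nat) (t : nat)                  (* line 2 of p's k-th invocation, returns t *)
| EL12 (p : nat) (nv : Sval Q RES) (b : bool)          (* line 12 GCAS with new value nv, returning b *)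
| EReturn (p : nat) (r : rval RES)                    (* line 14 *)
| EOther (p : nat).
Arguments EInvoke {OP RES Q}. Arguments EFAI {OP RES Q}. Arguments EL12 {OP RES Q}.
Arguments EReturn {OP RES Q}. Arguments EOther {OP RES Q}.

Inductive step OP RES Q (delta : Q -> OP -> Q -> RES -> Prop) :
  config OP RES Q -> event OP RES Q -> config OP RES Q -> Prop :=
| st_l1 : forall c p o, cL c p = Idle ->
    step delta c (EInvoke p o) (setL c p (At2 o))
| st_l2 : forall c p o, cL c p = At2 o ->
    step delta c (EFAI p (cK c p) (cC c)) (setL (setC c (S (cC c))) p (At3 o (cC c)))
| st_l3 : forall c p o t, cL c p = At3 o t ->
    step delta c (EOther p) (setL (setH c p (t, RNull)) p (At4 o t))
| st_l4_loop : forall c p o t, cL c p = At4 o t -> cH c p = (t, RNull) ->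
    step delta c (EOther p) (setL c p (At5 o t))
| st_l4_exit : forall c p o t, cL c p = At4 o t -> cH c p <> (t, RNull) ->
    step delta c (EOther p) (setL c p (At14 o t))
| st_l5 : forall c p o t, cL c p = At5 o t ->
    step delta c (EOther p) (setL c p (At6 o t (cS c)))
| st_l6_succ : forall c p o t ts ss rs q, cL c p = At6 o t (ts, ss, rs, PH q) ->
    cH c q = (ts, RNull) ->
    step delta c (EOther p) (setL (setH c q (ts, rs)) p (At7 o t (ts, ss, rs, PH q)))
| st_l6_fail : forall c p o t ts ss rs x, cL c p = At6 o t (ts, ss, rs, x) ->
    deref c x <> (ts, RNull) ->
    step delta c (EOther p) (setL c p (At7 o t (ts, ss, rs, x)))
| st_l7_succ : forall c p o t sv ta oa pa, cL c p = At7 o t sv -> cA c = (ta, oa, pa) ->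
    ta > t ->
    step delta c (EOther p) (setL (setA c (t, OOp o, PH p)) p (At8 o t sv))
| st_l7_fail : forall c p o t sv ta oa pa, cL c p = At7 o t sv -> cA c = (ta, oa, pa) ->
    ~ ta > t ->
    step delta c (EOther p) (setL c p (At8 o t sv))
| st_l8 : forall c p o t sv, cL c p = At8 o t sv ->
    step delta c (EOther p) (setL c p (At9 o t sv (cA c)))
| st_l9 : forall c p o t sv ta oa pa, cL c p = At9 o t sv (ta, oa, pa) ->
    step delta c (EOther p) (setL c p (At10 o t sv (ta, oa, pa) (deref c pa)))
| st_l10_then : forall c p o t sv ta oa pa hv, cL c p = At10 o t sv (ta, oa, pa) hv ->
    hv = (ta, RNull) ->
    step delta c (EOther p) (setL c p (At11 o t sv (ta, oa, pa)))
| st_l10_else : forall c p o t sv ta oa pa hv, cL c p = At10 o t sv (ta, oa, pa) hv ->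
    hv <> (ta, RNull) ->
    step delta c (EOther p) (setL c p (At13 o t sv (ta, oa, pa)))
| st_l11 : forall c p o t ts ss rs ps ta oa pa s' r',
    cL c p = At11 o t (ts, ss, rs, ps) (ta, oa, pa) ->
    apply_rel delta oa ss s' r' ->
    step delta c (EOther p) (setL c p (At12 o t (ts, ss, rs, ps) (ta, oa, pa) s' r'))
| st_l12_succ : forall c p o t sv ta oa pa s' r',
    cL c p = At12 o t sv (ta, oa, pa) s' r' -> cS c = sv ->
    step delta c (EL12 p (ta, s', RVal r', pa) true)
      (setL (setS c (ta, s', RVal r', pa)) p (At4 o t))
| st_l12_fail : forall c p o t sv ta oa pa s' r',
    cL c p = At12 o t sv (ta, oa, pa) s' r' -> cS c <> sv ->
    step delta c (EL12 p (ta, s', RVal r', pa) false) (setL c p (At4 o t))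
| st_l13_succ : forall c p o t sv av, cL c p = At13 o t sv av -> cA c = av ->
    step delta c (EOther p) (setL (setA c (t, OOp o, PH p)) p (At4 o t))
| st_l13_fail : forall c p o t sv av, cL c p = At13 o t sv av -> cA c <> av ->
    step delta c (EOther p) (setL c p (At4 o t))
| st_l14 : forall c p o t, cL c p = At14 o t ->
    step delta c (EReturn p (snd (cH c p)))
      (setK (setL c p Idle) p (S (cK c p))).

(* Initial configuration: C = 1, A = (0, NOOP, h(NOOP)), S = (0, s0, bottom, h(NOOP)),
   all processes idle; the initial contents of the H_p are left arbitrary. *)
Definition initial OP RES Q (s0 : Q) (c : config OP RES Q) : Prop :=
  cC c = 1 /\ cA c = (0, ONoop, PNoop) /\ cS c = (0, s0, RBot, PNoop) /\
  (forall p, cL c p = Idle) /\ (forall p, cK c p = 0).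

(* A (finite prefix of an) execution with n steps: configurations c 0 .. c n,
   step i labelled l i. Infinite executions are covered since any two steps
   lie in a common finite prefix. *)
Definition execution OP RES Q (delta : Q -> OP -> Q -> RES -> Prop) (s0 : Q)
  (n : nat) (c : nat -> config OP RES Q) (l : nat -> event OP RES Q) : Prop :=
  initial s0 (c 0) /\ forall i, i < n -> step delta (c i) (l i) (c (S i)).

(* Operations: None = the initial NOOP; Some (p, k) = the k-th invocation of DoOp by p. *)
Definition operation := option (nat * nat)%type.

(* t(o) = t : the F&I of o at line 2 (within the first n steps) returned t;
   t(NOOP) = 0. If o has not executed line 2, t(o) = infinity: no such t. *)
Definition t_of OP RES Q (n : nat) (l : nat -> event OP RES Q) (o : operation) (t : nat) : Prop :=
  match o with
  | None => t = 0
  | Some (p, k) => exists i, i < n /\ l i = EFAI p k t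
  end.

Definition h_of (o : operation) : ptr :=
  match o with None => PNoop | Some (p, _) => PH p end.

Definition line12_true_for OP RES Q (n : nat) (l : nat -> event OP RES Q)
  (o : operation) (i : nat) : Prop :=
  i < n /\ exists t q s r, t_of n l o t /\ l i = EL12 q (t, s, r, h_of o) true.

(* A tag (t, h) pairs a time stamp with a response location; operation o has tag
   (t(o), h(o)), and a successful line 12 for o installs that tag in S.  Invariant:
   every tag S has held and no longer holds is responded to, i.e. its location no
   longer contains (t, NULL).  Indeed a process can only change S after helping, at
   line 6, the operation whose tag S still holds, and line 3 only resets a location
   with a time stamp beyond every tag that might still enter S.  So at line 10 a
   process that sees (t, NULL) behind the tag of A knows that tag was never in S; if
   S is still unchanged at line 12, the tag it installs is new.  As t(o) is unique,
   two successful executions of line 12 for o would install the same tag twice. *)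

From Stdlib Require Import Arith Lia.

Set Implicit Arguments.

Section Universal.

Variables (OP RES Q : Type) (delta : Q -> OP -> Q -> RES -> Prop).
Notation cfg := (config OP RES Q).
Notation lc := (loc OP RES Q).
Notation tag := (nat * ptr)%type.

Definition stag (sv : Sval Q RES) : tag := let '(t, _, _, x) := sv in (t, x).
Definition sresp (sv : Sval Q RES) : rval RES := let '(_, _, r, _) := sv in r.
Definition atag (av : Aval OP) : tag := let '(t, _, x) := av in (t, x).

Lemma tag_eq_dec (x y : tag) : {x = y} + {x <> y}.
Proof. repeat decide equality. Qed.

Definition responded (c : cfg) (x : tag) : Prop := deref c (snd x) <> (fst x, RNull).

Definition actor (e : event OP RES Q) : nat :=
  match e with
  | EInvoke p _ | EFAI p _ _ | EL12 p _ _ | EReturn p _ | EOther p => p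
  end.

Definition loc_time (l : lc) : option nat :=
  match l with
  | Idle | At2 _ => None
  | At3 _ t | At4 _ t | At5 _ t | At6 _ t _ | At7 _ t _ | At8 _ t _ | At9 _ t _ _
  | At10 _ t _ _ _ | At11 _ t _ _ | At12 _ t _ _ _ _ | At13 _ t _ _ | At14 _ t => Some t
  end.

Definition loc_Sread (l : lc) : option (Sval Q RES) :=
  match l with
  | At6 _ _ sv | At7 _ _ sv | At8 _ _ sv | At9 _ _ sv _ | At10 _ _ sv _ _ | At11 _ _ sv _
  | At12 _ _ sv _ _ _ | At13 _ _ sv _ => Some sv
  | _ => None
  end.

Definition loc_Aread (l : lc) : option (Aval OP) :=
  match l with
  | At9 _ _ _ av | At10 _ _ _ av _ | At11 _ _ _ av | At12 _ _ _ av _ _ | At13 _ _ _ av => Some av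
  | _ => None
  end.

Lemma upd_same {X : Type} (f : nat -> X) p v : upd f p v p = v.
Proof. unfold upd; now rewrite Nat.eqb_refl. Qed.

Lemma upd_other {X : Type} (f : nat -> X) p v q : q <> p -> upd f p v q = f q.
Proof. intros Hq; unfold upd; now rewrite (proj2 (Nat.eqb_neq q p) Hq). Qed.

Section Step.

Variables (c c' : cfg) (e : event OP RES Q).
Hypothesis Hstep : step delta c e c'.
Let p := actor e.

Lemma step_loc_other r : r <> p -> cL c' r = cL c r.
Proof. intros Hr; destruct Hstep; simpl; now rewrite upd_other. Qed.

Lemma step_C_le : cC c <= cC c'.
Proof. destruct Hstep; simpl; lia. Qed.

Lemma step_S_cases : cS c' = cS c \/ exists q nv, e = EL12 q nv true.
Proof. destruct Hstep; simpl; eauto. Qed.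

Lemma step_A_cases :
  cA c' = cA c \/
  exists o t, cA c' = (t, OOp o, PH p) /\ loc_time (cL c p) = Some t /\
              forall o' t', cL c' p <> At3 o' t'.
Proof.
  unfold p; destruct Hstep; simpl; auto;
    right; do 2 eexists; rewrite upd_same, H; repeat split; discriminate.
Qed.

Lemma step_time_actor t :
  loc_time (cL c' p) = Some t -> loc_time (cL c p) = Some t \/ (t = cC c /\ cC c' = S t).
Proof.
  unfold p; destruct Hstep; simpl; rewrite upd_same; simpl; try discriminate;
    intros E; injection E as <-; rewrite ?H; auto.
Qed.

Lemma step_At3_actor o t : cL c' p = At3 o t -> t = cC c.
Proof.
  unfold p; destruct Hstep; simpl; rewrite upd_same; try discriminate; congruence.
Qed.

Lemma step_Sread_actor sv :
  loc_Sread (cL c' p) = Some sv -> loc_Sread (cL c p) = Some sv \/ sv = cS c.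
Proof.
  unfold p; destruct Hstep; simpl; rewrite upd_same; simpl; try discriminate;
    intros E; injection E as <-; rewrite ?H; auto.
Qed.

Lemma step_Aread_actor av :
  loc_Aread (cL c' p) = Some av -> loc_Aread (cL c p) = Some av \/ av = cA c.
Proof.
  unfold p; destruct Hstep; simpl; rewrite upd_same; simpl; try discriminate;
    intros E; injection E as <-; rewrite ?H; auto.
Qed.

End Step.

Lemma step_l12_true c c' q nv :
  step delta c (EL12 q nv true) c' ->
  cS c' = nv /\
  exists o t ta oa pa s' r', cL c q = At12 o t (cS c) (ta, oa, pa) s' r' /\
    nv = (ta, s', RVal r', pa) /\ cL c' q = At4 o t.
Proof.
  intros Hst; inversion Hst; subst; simpl.
  split; [reflexivity|]. do 7 eexists; split; [eassumption|]. now rewrite upd_same.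
Qed.

(* What a process at lines 7-12 knows, as long as S still holds the value sv it
   read at line 5. *)
Definition loc_spec (hist : tag -> Prop) (c : cfg) (l : lc) : Prop :=
  match l with
  | At7 _ _ sv | At8 _ _ sv => cS c = sv -> responded c (stag sv)
  | At9 _ _ sv av =>
      cS c = sv -> responded c (stag sv) /\ (hist (atag av) -> responded c (atag av))
  | At10 _ _ sv av hv =>
      cS c = sv -> responded c (stag sv) /\ (hv = (fst (atag av), RNull) -> ~ hist (atag av))
  | At11 _ _ sv av | At12 _ _ sv av _ _ =>
      cS c = sv -> responded c (stag sv) /\ ~ hist (atag av)
  | _ => True
  end.

(* The tags that may still enter S; line 3 must pick a time stamp beyond them. *)
Definition live (hist : tag -> Prop) (c : cfg) (x : tag) : Prop :=
  hist x \/ x = atag (cA c) \/ exists r av, loc_Aread (cL c r) = Some av /\ x = atag av.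

(* [hist] is the set of tags S has held so far. *)
Record Inv (hist : tag -> Prop) (c : cfg) : Prop := {
  inv_S_resp : sresp (cS c) <> RNull;
  inv_S_hist : hist (stag (cS c));
  inv_hist_responded : forall x, hist x -> x <> stag (cS c) -> responded c x;
  inv_live_lt : forall x, live hist c x -> fst x < cC c;
  inv_time_lt : forall r t, loc_time (cL c r) = Some t -> t < cC c;
  inv_fresh : forall q o t' t, cL c q = At3 o t' -> live hist c (t, PH q) -> t < t';
  inv_Sread : forall r sv, loc_Sread (cL c r) = Some sv -> sresp sv <> RNull /\ hist (stag sv);
  inv_spec : forall r, loc_spec hist c (cL c r) }.

Lemma loc_spec_transfer hist hist' c c' l :
  loc_spec hist c l ->
  (forall sv, loc_Sread l = Some sv -> cS c' = sv -> cS c = sv /\ forall x, hist' x -> hist x) ->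
  (forall sv, loc_Sread l = Some sv -> hist (stag sv)) ->
  (forall x, hist x -> responded c x -> responded c' x) ->
  loc_spec hist' c' l.
Proof.
  intros Hspec HS Hread Hresp.
  destruct l; simpl in *; trivial; intros ES;
    destruct (HS _ eq_refl ES) as [ES0 Hsub]; specialize (Hspec ES0);
    specialize (Hread _ eq_refl);
    try (destruct Hspec as [Hs Ha]; split); auto.
  intros Ehv Hh; exact (Ha Ehv (Hsub _ Hh)).
Qed.

Lemma step_responded hist c c' e x :
  Inv hist c -> step delta c e c' -> hist x -> responded c x -> responded c' x.
Proof.
  intros Hinv Hst Hx Hr; destruct Hst; try exact Hr;
    destruct x as [t0 [|q0]]; try exact Hr; unfold responded, deref in *; simpl in *.
  - (* line 3 resets H_p, but only to a time beyond every tag S has held *)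
    destruct (Nat.eq_dec q0 p) as [->|Hq]; [|now rewrite upd_other].
    rewrite upd_same; intros E; injection E as ->.
    assert (t0 < t0) by (eapply inv_fresh; eauto; now left). lia.
  - destruct (Nat.eq_dec q0 q) as [->|Hq]; [|now rewrite upd_other].
    rewrite upd_same; intros E; injection E as _ ->.
    apply (proj1 (inv_Sread Hinv p (sv := (ts, ss, RNull, PH q)) ltac:(now rewrite H))).
    reflexivity.
Qed.

Lemma step_spec_actor hist c c' e :
  Inv hist c -> step delta c e c' -> loc_spec hist c' (cL c' (actor e)).
Proof.
  intros Hinv Hst; pose proof (inv_spec Hinv (actor e)) as Hspec.
  destruct Hst; simpl in *; rewrite upd_same; simpl; trivial; rewrite H in Hspec; simpl in Hspec.
  - (* line 6 wrote the non-NULL response held by S *)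
    intros _; unfold responded; simpl; rewrite upd_same.
    assert (Hrs := proj1 (inv_Sread Hinv p (sv := (ts, ss, rs, PH q)) ltac:(now rewrite H))).
    simpl in Hrs; congruence.
  - exact Hspec.
  - exact Hspec.
  - (* if A holds the tag of S itself, it was responded to at line 6 *)
    intros ES; split; [exact (Hspec ES)|]; intros Hh.
    destruct (tag_eq_dec (atag (cA c)) (stag (cS c))) as [Ea|Ea].
    + rewrite Ea, ES; exact (Hspec ES).
    + exact (inv_hist_responded Hinv Hh Ea).
  - intros ES; destruct (Hspec ES) as [Hs Ha]; split; [exact Hs|].
    intros Ehv Hh; exact (Ha Hh Ehv).
  - intros ES; destruct (Hspec ES) as [Hs Ha]; split; [exact Hs|exact (Ha H0)].
  - exact Hspec.
Qed.

Lemma step_l12_true_unseen hist c c' q nv :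
  Inv hist c -> step delta c (EL12 q nv true) c' -> ~ hist (stag nv).
Proof.
  intros Hinv Hst.
  destruct (step_l12_true Hst) as (_ & o & t & ta & oa & pa & s' & r' & Eq & -> & _).
  pose proof (inv_spec Hinv q) as Hspec; rewrite Eq in Hspec.
  exact (proj2 (Hspec eq_refl)).
Qed.

Section InvStep.

Variables (hist hist' : tag -> Prop) (c c' : cfg) (e : event OP RES Q).
Hypotheses (Hinv : Inv hist c) (Hstep : step delta c e c')
  (Hhist' : forall x, hist' x <-> hist x \/ x = stag (cS c')).

Lemma hist_step_shrink : cS c' = cS c -> forall x, hist' x -> hist x.
Proof.
  intros ES x Hx; apply Hhist' in Hx as [Hx | ->]; [exact Hx|].
  rewrite ES; exact (inv_S_hist Hinv).
Qed.

Lemma live_step x :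
  live hist' c' x ->
  live hist c x \/
  exists o t, cA c' = (t, OOp o, PH (actor e)) /\ x = (t, PH (actor e)) /\
    loc_time (cL c (actor e)) = Some t /\ forall o' t', cL c' (actor e) <> At3 o' t'.
Proof.
  intros [Hx | [Hx | (r & av & Ear & ->)]].
  - destruct (step_S_cases Hstep) as [ES | (q & nv & Ee)].
    + left; left; exact (hist_step_shrink ES Hx).
    + apply Hhist' in Hx as [Hx | ->]; [left; left; exact Hx|].
      pose proof Hstep as Hst; rewrite Ee in Hst.
      destruct (step_l12_true Hst) as (-> & o & t & ta & oa & pa & s' & r' & Eq & -> & _).
      left; right; right; exists q, (ta, oa, pa); rewrite Eq; auto.
  - destruct (step_A_cases Hstep) as [EA | (o & t & EA & Et & Hn)].
    + left; right; left; now rewrite Hx, EA.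
    + right; exists o, t; rewrite Hx, EA; auto.
  - left; right.
    destruct (Nat.eq_dec r (actor e)) as [->|Hr].
    + destruct (step_Aread_actor Hstep Ear) as [Eold | ->]; [right|left]; eauto.
    + rewrite (step_loc_other Hstep Hr) in Ear; right; eauto.
Qed.

Lemma Sread_step r sv :
  loc_Sread (cL c' r) = Some sv -> sresp sv <> RNull /\ hist (stag sv).
Proof.
  intros Er; destruct (Nat.eq_dec r (actor e)) as [->|Hr].
  - destruct (step_Sread_actor Hstep Er) as [Eold | ->]; [exact (inv_Sread Hinv _ Eold)|].
    split; [exact (inv_S_resp Hinv) | exact (inv_S_hist Hinv)].
  - rewrite (step_loc_other Hstep Hr) in Er; exact (inv_Sread Hinv _ Er).
Qed.

Lemma spec_step r : loc_spec hist' c' (cL c' r).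
Proof.
  assert (Hread : forall sv, loc_Sread (cL c' r) = Some sv -> hist (stag sv))
    by (intros sv Er; exact (proj2 (Sread_step _ Er))).
  destruct (step_S_cases Hstep) as [ES | (q & nv & Ee)].
  - assert (Hspec : loc_spec hist c' (cL c' r)).
    { destruct (Nat.eq_dec r (actor e)) as [->|Hr]; [exact (step_spec_actor Hinv Hstep)|].
      rewrite (step_loc_other Hstep Hr) in Hread |- *.
      eapply loc_spec_transfer;
        [exact (inv_spec Hinv r) | | exact Hread | exact (fun x => step_responded Hinv Hstep)].
      intros sv _ Esv; split; [congruence | auto]. }
    eapply loc_spec_transfer; [exact Hspec | | exact Hread | auto].
    intros sv _ Esv; split; [exact Esv | exact (hist_step_shrink ES)].
  - pose proof Hstep as Hst; rewrite Ee in Hst.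
    destruct (Nat.eq_dec r q) as [->|Hr].
    + destruct (step_l12_true Hst) as (_ & o & t & _ & _ & _ & _ & _ & _ & _ & ->); exact I.
    + (* the tag just installed was never in S, so every other process sees S changed *)
      rewrite (step_loc_other Hst Hr) in Hread |- *.
      eapply loc_spec_transfer;
        [exact (inv_spec Hinv r) | | exact Hread | exact (fun x => step_responded Hinv Hstep)].
      intros sv Er Esv; exfalso.
      apply (step_l12_true_unseen Hinv Hst).
      destruct (step_l12_true Hst) as [<- _]; rewrite Esv; exact (Hread _ Er).
Qed.

Lemma Inv_step : Inv hist' c'.
Proof.
  pose proof (step_C_le Hstep) as HC.
  constructor.
  - destruct (step_S_cases Hstep) as [-> | (q & nv & Ee)]; [exact (inv_S_resp Hinv)|].
    rewrite Ee in Hstep.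
    destruct (step_l12_true Hstep) as (ES & o & t & ta & oa & pa & s' & r' & _ & Env & _).
    rewrite ES, Env; discriminate.
  - apply Hhist'; now right.
  - intros x Hx Hne; apply Hhist' in Hx as [Hx | ->]; [|contradiction].
    apply (step_responded Hinv Hstep Hx).
    destruct (tag_eq_dec x (stag (cS c))) as [->|Hne0]; [|exact (inv_hist_responded Hinv Hx Hne0)].
    destruct (step_S_cases Hstep) as [ES | (q & nv & Ee)]; [rewrite ES in Hne; contradiction|].
    rewrite Ee in Hstep.
    destruct (step_l12_true Hstep) as (_ & o & t & ta & oa & pa & s' & r' & Eq & _).
    pose proof (inv_spec Hinv q) as Hspec; rewrite Eq in Hspec.
    exact (proj1 (Hspec eq_refl)).
  - intros x Hx; destruct (live_step Hx) as [Hl | (o & t & _ & -> & Et & _)].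
    + pose proof (inv_live_lt Hinv Hl); lia.
    + pose proof (inv_time_lt Hinv _ Et); simpl; lia.
  - intros r t Et; destruct (Nat.eq_dec r (actor e)) as [->|Hr].
    + destruct (step_time_actor Hstep Et) as [Eold | [_ ->]]; [|lia].
      pose proof (inv_time_lt Hinv _ Eold); lia.
    + rewrite (step_loc_other Hstep Hr) in Et; pose proof (inv_time_lt Hinv _ Et); lia.
  - intros q o t' t Eq Hl; destruct (Nat.eq_dec q (actor e)) as [->|Hq].
    + rewrite (step_At3_actor Hstep Eq).
      destruct (live_step Hl) as [Hl0 | (o' & t0 & _ & _ & _ & Hn)].
      * exact (inv_live_lt Hinv Hl0).
      * exfalso; exact (Hn _ _ Eq).
    + rewrite (step_loc_other Hstep Hq) in Eq.
      destruct (live_step Hl) as [Hl0 | (o' & t0 & _ & Ex & _)].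
      * exact (inv_fresh Hinv Eq Hl0).
      * injection Ex as _ Ex; contradiction.
  - intros r sv Er; destruct (Sread_step _ Er) as [Hr Hh]; split; [exact Hr|].
    apply Hhist'; now left.
  - exact spec_step.
Qed.

End InvStep.

Definition S_tags_upto (c : nat -> cfg) (k : nat) (x : tag) : Prop :=
  exists m, m <= k /\ stag (cS (c m)) = x.

Lemma Inv_initial s0 hist c :
  initial s0 c -> (forall x, hist x <-> x = stag (cS c)) -> Inv hist c.
Proof.
  intros (EC & EA & ES & EL & _) Hhist.
  assert (Hlive : forall x, live hist c x -> x = (0, PNoop)).
  { intros x [Hx | [-> | (r & av & Ear & _)]].
    - apply Hhist in Hx; now rewrite Hx, ES.
    - now rewrite EA.
    - now rewrite EL in Ear. }
  constructor.
  - now rewrite ES.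
  - now apply Hhist.
  - intros x Hx Hne; apply Hhist in Hx; contradiction.
  - intros x Hx; rewrite (Hlive x Hx), EC; simpl; lia.
  - intros r t; now rewrite EL.
  - intros q o t' t; now rewrite EL.
  - intros r sv; now rewrite EL.
  - intros r; now rewrite EL.
Qed.

Lemma Inv_reachable s0 n c l k :
  execution delta s0 n c l -> k <= n -> Inv (S_tags_upto c k) (c k).
Proof.
  intros [Hinit Hsteps]; induction k as [|k IH]; intros Hk.
  - eapply Inv_initial; [exact Hinit|]; intros x; split.
    + intros (m & Hm & <-); now replace m with 0 by lia.
    + intros ->; now exists 0.
  - eapply Inv_step; [exact (IH ltac:(lia)) | exact (Hsteps k ltac:(lia)) |]; intros x; split.
    + intros (m & Hm & <-).
      destruct (Nat.eq_dec m (S k)) as [->|Hne]; [now right|left; exists m; split; [lia|auto]].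
    + intros [(m & Hm & <-) | ->]; [exists m; split; [lia|auto] | now exists (S k)].
Qed.

Lemma line12_true_tags_distinct s0 n c l i j q1 q2 nv1 nv2 :
  execution delta s0 n c l -> i < j -> j < n ->
  l i = EL12 q1 nv1 true -> l j = EL12 q2 nv2 true -> stag nv1 <> stag nv2.
Proof.
  intros Hex Hij Hj Ei Ej Etag.
  pose proof (Inv_reachable Hex (k := j) ltac:(lia)) as Hinv.
  destruct Hex as [_ Hsteps].
  pose proof (Hsteps i ltac:(lia)) as Si; rewrite Ei in Si.
  pose proof (Hsteps j Hj) as Sj; rewrite Ej in Sj.
  apply (step_l12_true_unseen Hinv Sj).
  exists (S i); split; [lia|].
  now rewrite (proj1 (step_l12_true Si)).
Qed.

Definition busy (l : lc) : Prop := match l with Idle | At2 _ => False | _ => True end.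

Definition passed_line2 (c : cfg) (p k : nat) : Prop :=
  k < cK c p \/ (k = cK c p /\ busy (cL c p)).

Lemma passed_line2_step c c' e r k :
  step delta c e c' -> passed_line2 c r k -> passed_line2 c' r k.
Proof.
  unfold passed_line2; intros Hst; destruct Hst;
    simpl; unfold upd; destruct (Nat.eqb r p) eqn:E;
    try (apply Nat.eqb_eq in E; subst); rewrite ?H in *; simpl in *; intuition lia.
Qed.

Lemma step_FAI c c' p k t :
  step delta c (EFAI p k t) c' -> ~ passed_line2 c p k /\ passed_line2 c' p k.
Proof.
  intros Hst; inversion Hst as [|? ? o Ho| | | | | | | | | | | | | | | | | |]; subst.
  unfold passed_line2; simpl; rewrite upd_same, Ho; simpl; split; [lia | auto].
Qed.

Lemma FAI_at_most_once s0 n c l p k t1 t2 a b :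
  execution delta s0 n c l -> a < b -> b < n ->
  l a = EFAI p k t1 -> l b = EFAI p k t2 -> False.
Proof.
  intros [_ Hsteps] Hab Hb Ea Eb.
  assert (Hpassed : forall m, a < m -> m <= n -> passed_line2 (c m) p k).
  { induction m as [|m IH]; intros Ham Hm; [lia|].
    pose proof (Hsteps m ltac:(lia)) as Sm.
    destruct (Nat.eq_dec a m) as [<-|Hne].
    - rewrite Ea in Sm; exact (proj2 (step_FAI Sm)).
    - apply (passed_line2_step Sm), IH; lia. }
  pose proof (Hsteps b Hb) as Sb; rewrite Eb in Sb.
  exact (proj1 (step_FAI Sb) (Hpassed b Hab ltac:(lia))).
Qed.

Lemma t_of_unique s0 n c l o t1 t2 :
  execution delta s0 n c l -> t_of n l o t1 -> t_of n l o t2 -> t1 = t2.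
Proof.
  intros Hex; destruct o as [[p k]|]; simpl; [|congruence].
  intros (a & Ha & Ea) (b & Hb & Eb).
  destruct (lt_eq_lt_dec a b) as [[Hab | <-] | Hba].
  - exfalso; exact (FAI_at_most_once Hex Hab Hb Ea Eb).
  - rewrite Ea in Eb; congruence.
  - exfalso; exact (FAI_at_most_once Hex Hba Ha Eb Ea).
Qed.

End Universal.

Theorem mainTheorem12 :
  forall (OP RES Q : Type) (delta : Q -> OP -> Q -> RES -> Prop) (s0 : Q)
         (n : nat) (c : nat -> config OP RES Q) (l : nat -> event OP RES Q),
    execution delta s0 n c l ->
    forall (o : operation) (i j : nat),
      line12_true_for n l o i -> line12_true_for n l o j -> i = j.
Proof.
  intros OP RES Q delta s0 n c l Hex o i j
    [Hi (t1 & q1 & s1 & r1 & Ht1 & Ei)] [Hj (t2 & q2 & s2 & r2 & Ht2 & Ej)].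
  rewrite <- (t_of_unique _ _ _ Hex Ht1 Ht2) in Ej.
  destruct (lt_eq_lt_dec i j) as [[Hij | Hij] | Hji]; [exfalso| exact Hij | exfalso].
  - exact (line12_true_tags_distinct Hex Hij Hj Ei Ej eq_refl).
  - exact (line12_true_tags_distinct Hex Hji Hi Ej Ei eq_refl).
Qed.
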